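(* For each $n \geq 3$, $\operatorname{ssp}(K_n) \geq n$.
   Context: A family $\mathcal{P}$ of paths in a graph $G$ is strong-separating if for every ordered pair of distinct edges $e,f$ of $G$ there is a path in $\mathcal{P}$ containing $e$ but not $f$; $\operatorname{ssp}(G)$ is the minimum size of such a family. $K_n$ is the complete graph on $n$ vertices. *)

From mathcomp Require Import all_boot.
Set Implicit Arguments. Unset Strict Implicit. Unset Printing Implicit Defensive.

(* A simple graph on a finite vertex type T is given by a symmetric,
   irreflexive adjacency relation adj.  Edges are the 2-element sets {x,y}
   with adj x y. *)
Definition is_edge (T : finType) (adj : rel T) (e : {set T}) : Prop :=
  exists x y, adj x y /\ e = [set x; y].

Definition is_gpath (T : finType) (adj : rel T) (p : seq T) : bool :=
  if p is x :: q then path adj x q && uniq p else false.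

Definition path_edges (T : finType) (p : seq T) : seq {set T} :=
  [seq [set xy.1; xy.2] | xy <- zip p (behead p)].

(* A family of paths (given as a list; its size is the number of distinct
   paths in it) is strong-separating if for every ordered pair of distinct
   edges e, f there is a path of the family containing e but not f. *)
Definition strong_separating (T : finType) (adj : rel T) (F : seq (seq T)) : Prop :=
  (forall p, p \in F -> is_gpath adj p) /\
  (forall e f, is_edge adj e -> is_edge adj f -> e <> f ->
     exists2 p, p \in F & (e \in path_edges p) && (f \notin path_edges p)).

Definition Kadj (n : nat) : rel 'I_n := fun x y => x != y.

From mathcomp Require Import all_boot zify.
Set Implicit Arguments. Unset Strict Implicit. Unset Printing Implicit Defensive.

(* Fix a vertex v and weight a path by 2 if it is a single edge and by 1
   otherwise.  For x <> v the edge vx is covered by paths of total weight at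
   least 2: a path containing vx but not vy (y a third vertex) is either the
   edge vx itself or has another edge f, and a path containing vx but not f
   is a second path through vx.  On the other hand a path has at most two
   edges at v, and at most one if it is a single edge, so it contributes
   weight at most 2 at v; choosing v as an end of some longer path, or off
   some short path, one path contributes at most 1.  Hence
   2(n - 1) <= 2 |F| - 1. *)

Definition path_degree (T : finType) (v : T) (p : seq T) : nat :=
  count (fun e : {set T} => v \in e) (path_edges p).

Definition path_weight (T : Type) (p : seq T) : nat :=
  if size p == 2 then 2 else 1.

Definition star_load (T : finType) (v : T) (p : seq T) : nat :=
  \sum_(x | x != v) ([set v; x] \in path_edges p) * path_weight p.

Lemma size_path_edges (T : finType) (p : seq T) : size (path_edges p) = (size p).-1.
Proof.
by rewrite size_map size_zip size_behead; case: p => //= a q; exact: minn_idPr (leqnSn _).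
Qed.

Lemma path_weight_gt0 (T : Type) (p : seq T) : 0 < path_weight p.
Proof. by rewrite /path_weight; case: ifP. Qed.

Lemma exists_notin (T : finType) (s : seq T) : size s < #|T| -> exists y, y \notin s.
Proof.
move=> hs; suff /subsetPn[y _ hy] : ~~ (T \subset s) by exists y.
by apply: contraL hs => /subset_leq_card hTs; rewrite -leqNgt (leq_trans hTs) ?card_size.
Qed.

Lemma set2_inj (T : finType) (v : T) : injective (fun x => [set v; x]).
Proof.
move=> x y /setP h; have := h y; rewrite !in_set2 eqxx orbT => /orP[/eqP yv | /eqP //].
by have := h x; rewrite !in_set2 yv orbb eqxx orbT => /esym/eqP.
Qed.

Lemma sum_set2_mem_le_count (T : finType) (v : T) (s : seq {set T}) :
  \sum_(x | x != v) ([set v; x] \in s : nat) <= count (fun e : {set T} => v \in e) s.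
Proof.
have -> : \sum_(x | x != v) ([set v; x] \in s : nat)
          = \sum_(x | (x != v) && ([set v; x] \in s)) 1.
  by rewrite big_mkcondr; apply: eq_bigr => x _; case: (_ \in s).
rewrite sum_nat_cond_const muln1 -(card_imset _ (@set2_inj T v)).
rewrite -size_filter; apply: leq_trans (card_size [seq e <- s | v \in (e : {set T})]).
apply: subset_leq_card.
by apply/subsetP => e /imsetP[x]; rewrite inE => /andP[_ hx] ->; rewrite mem_filter set21.
Qed.

Lemma path_degree_cons_le (T : finType) (v a : T) q :
  path_degree v (a :: q) <= count_mem v (belast a q) + count_mem v q.
Proof.
elim: q a => [|b q IH] a //=; rewrite /path_degree /= -/(path_degree v (b :: q)).
have := IH b; rewrite in_set2 [b == v]eq_sym [a == v]eq_sym.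
case: (v == a); case: (v == b) => /=; lia.
Qed.

Lemma path_degree_le_size (T : finType) (v : T) p : path_degree v p <= (size p).-1.
Proof. by rewrite -size_path_edges count_size. Qed.

Lemma path_degree_notin (T : finType) (v : T) p : v \notin p -> path_degree v p = 0.
Proof.
case: p => [|a q] // hv; apply/eqP; rewrite -leqn0.
apply: leq_trans (path_degree_cons_le v a q) _.
have /count_memPn -> : v \notin belast a q by apply: contra hv => /mem_belast.
by move: hv; rewrite in_cons negb_or => /andP[_ /count_memPn ->].
Qed.

Lemma gpath_degree_le (T : finType) (adj : rel T) (v a : T) q :
  is_gpath adj (a :: q) -> path_degree v (a :: q) <= (v \in belast a q) + (v \in q).
Proof.
move=> /andP[_ hu]; rewrite -!count_uniq_mem ?path_degree_cons_le //.
  by move: hu; rewrite cons_uniq => /andP[].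
by move: hu; rewrite lastI rcons_uniq => /andP[].
Qed.

Lemma gpath_degree_le2 (T : finType) (adj : rel T) (v : T) p :
  is_gpath adj p -> path_degree v p <= 2.
Proof.
case: p => [|a q] // /(gpath_degree_le v) hle.
exact: leq_trans hle (leq_add (leq_b1 _) (leq_b1 _)).
Qed.

Lemma gpath_degree_head (T : finType) (adj : rel T) (a : T) q :
  is_gpath adj (a :: q) -> path_degree a (a :: q) <= 1.
Proof.
move=> hp; apply: leq_trans (gpath_degree_le a hp) _.
by move: hp => /andP[_ /andP[/negbTE -> _]]; rewrite addn0 leq_b1.
Qed.

Lemma star_load_le_degree (T : finType) (v : T) p :
  star_load v p <= path_degree v p * path_weight p.
Proof. by rewrite /star_load -big_distrl leq_mul2r sum_set2_mem_le_count orbT. Qed.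

Lemma star_load_le2 (T : finType) (adj : rel T) (v : T) p :
  is_gpath adj p -> star_load v p <= 2.
Proof.
move=> hp; apply: leq_trans (star_load_le_degree v p) _; rewrite /path_weight.
case: eqP => [hs | _]; last by rewrite muln1 (gpath_degree_le2 v hp).
by have := path_degree_le_size v p; rewrite hs; case: path_degree => [|[]].
Qed.

Lemma exists_light_vertex (T : finType) (adj : rel T) p :
  2 < #|T| -> is_gpath adj p -> exists v, star_load v p <= 1.
Proof.
case: p => [|a q] // hT hp; case: (leqP (size q) 1) => hq.
  have [v hv] : exists v, v \notin a :: q
    by apply: exists_notin; rewrite /= (leq_ltn_trans _ hT) // ltnS.
  by exists v; apply: leq_trans (star_load_le_degree v _) _; rewrite path_degree_notin.
exists a; apply: leq_trans (star_load_le_degree a _) _.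
by rewrite /path_weight eqSS gtn_eqF // muln1 (gpath_degree_head hp).
Qed.

Lemma gpath_edge_is_edge (T : finType) (adj : rel T) p e :
  is_gpath adj p -> e \in path_edges p -> is_edge adj e.
Proof.
case: p => [|a q] // /andP[hp _] /mapP[[x y] hxy ->]; exists x, y; split => //.
elim: q a hp hxy => [|b q IH] a //= /andP[hab hp].
by rewrite inE => /orP[/eqP[-> ->] // | /(IH b hp)].
Qed.

Lemma gpath_other_edge (T : finType) (adj : rel T) p e :
  is_gpath adj p -> e \in path_edges p -> size p != 2 ->
  exists2 f, f \in path_edges p & f != e.
Proof.
case: p => [|a [|b [|c r]]] // /andP[_ /andP[ha _]] he _.
have abc : [set a; b] != [set b; c].
  apply: contraNneq ha => /setP/(_ a); rewrite !in_set2 eqxx /= => /esym.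
  by case/orP => /eqP ->; rewrite !inE eqxx ?orbT.
case: (eqVneq e [set a; b]) => [-> | hne].
  by exists [set b; c]; [rewrite !inE eqxx orbT | rewrite eq_sym].
by exists [set a; b]; [rewrite mem_head | rewrite eq_sym].
Qed.

Lemma leq_sum_uniq_subset (I : eqType) (s s' : seq I) (G : I -> nat) :
  uniq s -> uniq s' -> {subset s <= s'} -> \sum_(i <- s) G i <= \sum_(i <- s') G i.
Proof. exact: (@uniq_sub_le_big _ addn leq leqnn (fun m n => leq_addr n m)). Qed.

Lemma edge_weight_ge2 (T : finType) (adj : rel T) (F : seq (seq T)) e f :
  strong_separating adj F -> is_edge adj e -> is_edge adj f -> e <> f ->
  2 <= \sum_(p <- undup F) (e \in path_edges p) * path_weight p.
Proof.
move=> [hpath hsep] he hf hef.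
have [p1 p1F /andP[ep1 _]] := hsep e f he hf hef.
have p1U : p1 \in undup F by rewrite mem_undup.
case: (eqVneq (size p1) 2) => hs.
  apply: leq_trans (leq_sum_uniq_subset _ (s := [:: p1]) _ (undup_uniq F) _) => //.
    by rewrite big_seq1 ep1 /path_weight hs.
  by move=> p; rewrite mem_seq1 => /eqP ->.
have [f' f'p1 f'e] := gpath_other_edge (hpath _ p1F) ep1 hs.
have f'E := gpath_edge_is_edge (hpath _ p1F) f'p1.
have ef' : e <> f' by move=> h; rewrite h eqxx in f'e.
have [q qF /andP[qe f'q]] := hsep e f' he f'E ef'.
have qU : q \in undup F by rewrite mem_undup.
have qp1 : p1 != q by apply: contraNneq f'q => <-.
apply: leq_trans (leq_sum_uniq_subset _ (s := [:: p1; q]) _ (undup_uniq F) _).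
- by rewrite big_cons big_seq1 ep1 qe !mul1n (leq_add (path_weight_gt0 _)) ?path_weight_gt0.
- by rewrite /= inE qp1.
- by move=> p; rewrite !inE => /orP[] /eqP ->.
Qed.

Lemma sum_lt_mul_size (I : eqType) (c : nat) (s : seq I) (G : I -> nat) i0 :
  uniq s -> i0 \in s -> G i0 < c -> (forall i, i \in s -> G i <= c) ->
  \sum_(i <- s) G i < c * size s.
Proof.
move=> us i0s hi0 hG.
have -> : c * size s = \sum_(i <- s) c by rewrite big_const_seq count_predT iter_addn_0.
rewrite !(bigD1_seq i0) //= -addSn leq_add // big_seq_cond [X in _ <= X]big_seq_cond.
by apply: leq_sum => i /andP[/hG].
Qed.

Lemma complete_edge_weight_ge2 (T : finType) (F : seq (seq T)) (v x : T) :
  2 < #|T| -> strong_separating (fun x y : T => x != y) F -> x != v ->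
  2 <= \sum_(p <- undup F) ([set v; x] \in path_edges p) * path_weight p.
Proof.
move=> hT hF hxv; have [y] : exists y, y \notin [:: x; v] by apply: exists_notin.
rewrite !inE negb_or => /andP[hyx hyv].
have star_edge z : z != v -> is_edge (fun x y : T => x != y) [set v; z].
  by move=> hzv; exists v, z; rewrite eq_sym.
apply: edge_weight_ge2 hF (star_edge _ hxv) (star_edge _ hyv) _.
by move=> /set2_inj /eqP; rewrite eq_sym (negbTE hyx).
Qed.

Lemma complete_graph_ssp_ge (T : finType) (F : seq (seq T)) :
  2 < #|T| -> strong_separating (fun x y : T => x != y) F -> #|T| <= size (undup F).
Proof.
move=> hT hF; set U := undup F.
have pathU p : p \in U -> is_gpath (fun x y : T => x != y) p.
  by rewrite mem_undup; apply: hF.1.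
have cover v x := @complete_edge_weight_ge2 T F v x hT hF.
have [p0 p0U] : exists p0, p0 \in U.
  have [v0 _] : exists v0 : T, v0 \notin [::] 
    by apply: exists_notin; exact: ltnW (ltnW hT).
  have [x0] : exists x0, x0 \notin [:: v0] by apply: exists_notin; exact: ltnW hT.
  rewrite mem_seq1 => /cover /ltnW; rewrite lt0n sum_nat_seq_neq0.
  by case/hasP => p0 p0U _; exists p0.
have [v hv] := exists_light_vertex hT (pathU _ p0U).
have lower : 2 * #|T|.-1 <= \sum_(p <- U) star_load v p.
  rewrite /star_load exchange_big /=.
  by apply: leq_trans _ (leq_sum _ (cover v)); rewrite sum_nat_const cardC1 mulnC.
have upper : \sum_(p <- U) star_load v p < 2 * size U.
  apply: (@sum_lt_mul_size _ 2 _ _ _ (undup_uniq F) p0U hv) => p pU.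
  exact: star_load_le2 (pathU _ pU).
have := leq_ltn_trans lower upper; lia.
Qed.

Theorem proposition2p1 (n : nat) : 3 <= n ->
  forall F : seq (seq 'I_n), strong_separating (@Kadj n) F ->
  n <= size (undup F).
Proof. by move=> hn F /complete_graph_ssp_ge; rewrite card_ord; apply. Qed.
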